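(* Let $\varepsilon$ be a locally variational source form on $\mathbb{R}\times T^2M$ and let $\alpha'$ be the $2$-form on $T^1M$ given in charts by $\alpha'=\tfrac12 D\,dx\wedge dy+(B_{xx}dx+B_{xy}dy)\wedge d\dot x+(B_{xy}dx+B_{yy}dy)\wedge d\dot y$. Then in every fibered chart $(t,x,y)$ (on its domain) one has $\alpha'-\omega=d\kappa$, where $$\omega=\tfrac12\,D(x,y,0,0)\,dx\wedge dy,$$ $$\kappa=-\Big(\int_0^{\dot x}B_{xx}(x,y,\nu,\dot y)\,d\nu+\int_0^{\dot y}B_{xy}(x,y,0,\sigma)\,d\sigma\Big)dx-\Big(\int_0^{\dot x}B_{xy}(x,y,\nu,\dot y)\,d\nu+\int_0^{\dot y}B_{yy}(x,y,0,\sigma)\,d\sigma\Big)dy.$$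
   Context: Setting: $M$ is a smooth connected $2$-manifold, $Y=\mathbb{R}\times M$; $J^{1}Y\cong\mathbb{R}\times T^{1}M$, $J^{2}Y\cong\mathbb{R}\times T^{2}M$, with chart coordinates $(t,x,y,\dot x,\dot y)$, $(t,x,y,\dot x,\dot y,\ddot x,\ddot y)$ induced by charts $(x,y)$ on $M$; charts are assumed to have domains on which the segment integrals below make sense (e.g. rectangular in the velocity variables). Contact forms $\omega^x=dx-\dot x dt$, $\omega^y=dy-\dot y dt$. A source form $\varepsilon=(\varepsilon_x\omega^x+\varepsilon_y\omega^y)\wedge dt$ on $\mathbb{R}\times T^2M$ is locally variational iff locally it is the Euler–Lagrange form of a first-order Lagrangian; equivalently in every chart $\varepsilon_x=A_x+B_{xx}\ddot x+B_{xy}\ddot y$, $\varepsilon_y=A_y+B_{xy}\ddot x+B_{yy}\ddot y$ with $A_x,A_y,B_{xx},B_{xy},B_{yy}$ functions of $(x,y,\dot x,\dot y)$ satisfying the Helmholtz conditions: $\partial B_{xx}/\partial\dot y=\partial B_{xy}/\partial\dot x$, $\partial B_{yy}/\partial\dot x=\partial B_{xy}/\partial\dot y$, $\partial A_x/\partial\dot x-\dot x\,\partial B_{xx}/\partial x-\dot y\,\partial B_{xx}/\partial y=0$, $\partial A_y/\partial\dot y-\dot x\,\partial B_{yy}/\partial x-\dot y\,\partial B_{yy}/\partial y=0$, $\partial A_x/\partial\dot y+\partial A_y/\partial\dot x-2\dot x\,\partial B_{xy}/\partial x-2\dot y\,\partial B_{xy}/\partial y=0$, $\partial A_x/\partial y-\partial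 A_y/\partial x-\frac12\dot x\,\partial_x D-\frac12\dot y\,\partial_y D=0$, where $D=\partial A_x/\partial\dot y-\partial A_y/\partial\dot x$ (a function of $(x,y,\dot x,\dot y)$). *)

From Stdlib Require Import Reals ClassicalEpsilon.
Open Scope R_scope.

(** Chart-level setting.  A fibered chart (t,x,y) on Y = R x M induces
    coordinates (x, y, xd, yd) = (x, y, xdot, ydot) on T^1 M; the
    coefficient functions of the source form depend only on these. *)
Definition F4 := R -> R -> R -> R -> R.
Definition Dom4 := R -> R -> R -> R -> Prop.

(** Partial derivatives (the value of the derivative when it exists;
    chosen arbitrarily otherwise -- smoothness hypotheses guarantee existence). *)
Definition pd_x (f : F4) : F4 := fun x y xd yd =>
  epsilon (inhabits 0) (fun l => derivable_pt_lim (fun t => f t y xd yd) x l).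
Definition pd_y (f : F4) : F4 := fun x y xd yd =>
  epsilon (inhabits 0) (fun l => derivable_pt_lim (fun t => f x t xd yd) y l).
Definition pd_xd (f : F4) : F4 := fun x y xd yd =>
  epsilon (inhabits 0) (fun l => derivable_pt_lim (fun t => f x y t yd) xd l).
Definition pd_yd (f : F4) : F4 := fun x y xd yd =>
  epsilon (inhabits 0) (fun l => derivable_pt_lim (fun t => f x y xd t) yd l).

Definition has_partials_on (W : Dom4) (f : F4) : Prop :=
  forall x y xd yd, W x y xd yd ->
    (exists l, derivable_pt_lim (fun t => f t y xd yd) x l) /\
    (exists l, derivable_pt_lim (fun t => f x t xd yd) y l) /\
    (exists l, derivable_pt_lim (fun t => f x y t yd) xd l) /\
    (exists l, derivable_pt_lim (fun t => f x y xd t) yd l).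

Definition cont_on (W : Dom4) (f : F4) : Prop :=
  forall x y xd yd, W x y xd yd ->
    forall eps, 0 < eps -> exists delta, 0 < delta /\
      forall x' y' xd' yd', W x' y' xd' yd' ->
        Rabs (x' - x) < delta -> Rabs (y' - y) < delta ->
        Rabs (xd' - xd) < delta -> Rabs (yd' - yd) < delta ->
        Rabs (f x' y' xd' yd' - f x y xd yd) < eps.

Fixpoint Ck_on (W : Dom4) (k : nat) (f : F4) : Prop :=
  match k with
  | O => cont_on W f
  | S k' => cont_on W f /\ has_partials_on W f /\
            Ck_on W k' (pd_x f) /\ Ck_on W k' (pd_y f) /\
            Ck_on W k' (pd_xd f) /\ Ck_on W k' (pd_yd f)
  end.

Definition smooth_on (W : Dom4) (f : F4) : Prop := forall k, Ck_on W k f.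

Definition open4 (W : Dom4) : Prop :=
  forall x y xd yd, W x y xd yd -> exists delta, 0 < delta /\
    forall x' y' xd' yd',
      Rabs (x' - x) < delta -> Rabs (y' - y) < delta ->
      Rabs (xd' - xd) < delta -> Rabs (yd' - yd) < delta ->
      W x' y' xd' yd'.

(** The chart domain contains the segments used in the integrals:
    nu in [0, xd] at fixed yd, and sigma in [0, yd] at xd = 0. *)
Definition segment_domain (W : Dom4) : Prop :=
  forall x y xd yd, W x y xd yd ->
    forall s, 0 <= s <= 1 -> W x y (s * xd) yd /\ W x y 0 (s * yd).

Definition Rint (f : R -> R) (a b : R) : R :=
  epsilon (inhabits 0)
    (fun l => exists pr : Riemann_integrable f a b, RiemannInt pr = l).

Definition Dfun (Ax Ay : F4) : F4 := fun x y xd yd =>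
  pd_yd Ax x y xd yd - pd_xd Ay x y xd yd.

Definition helmholtz (W : Dom4) (Ax Ay Bxx Bxy Byy : F4) : Prop :=
  forall x y xd yd, W x y xd yd ->
    pd_yd Bxx x y xd yd = pd_xd Bxy x y xd yd /\
    pd_xd Byy x y xd yd = pd_yd Bxy x y xd yd /\
    pd_xd Ax x y xd yd - xd * pd_x Bxx x y xd yd - yd * pd_y Bxx x y xd yd = 0 /\
    pd_yd Ay x y xd yd - xd * pd_x Byy x y xd yd - yd * pd_y Byy x y xd yd = 0 /\
    pd_yd Ax x y xd yd + pd_xd Ay x y xd yd
      - 2 * xd * pd_x Bxy x y xd yd - 2 * yd * pd_y Bxy x y xd yd = 0 /\
    pd_y Ax x y xd yd - pd_x Ay x y xd yd
      - / 2 * xd * pd_x (Dfun Ax Ay) x y xd yd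
      - / 2 * yd * pd_y (Dfun Ax Ay) x y xd yd = 0.

(** Differential forms on the chart domain, in the coordinate coframe
    (dx, dy, dxd, dyd).  A 2-form is given by its coefficients on
    dx^dy, dx^dxd, dx^dyd, dy^dxd, dy^dyd, dxd^dyd. *)
Record form1 := Form1 { f1_x : F4; f1_y : F4; f1_xd : F4; f1_yd : F4 }.
Record form2 := Form2 { f2_xy : F4; f2_xxd : F4; f2_xyd : F4;
                        f2_yxd : F4; f2_yyd : F4; f2_xdyd : F4 }.

Definition sub2 (a b : form2) : form2 :=
  Form2 (fun x y u v => f2_xy a x y u v - f2_xy b x y u v)
        (fun x y u v => f2_xxd a x y u v - f2_xxd b x y u v)
        (fun x y u v => f2_xyd a x y u v - f2_xyd b x y u v)
        (fun x y u v => f2_yxd a x y u v - f2_yxd b x y u v)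
        (fun x y u v => f2_yyd a x y u v - f2_yyd b x y u v)
        (fun x y u v => f2_xdyd a x y u v - f2_xdyd b x y u v).

Definition dform1 (k : form1) : form2 :=
  Form2 (fun x y u v => pd_x (f1_y k) x y u v - pd_y (f1_x k) x y u v)
        (fun x y u v => pd_x (f1_xd k) x y u v - pd_xd (f1_x k) x y u v)
        (fun x y u v => pd_x (f1_yd k) x y u v - pd_yd (f1_x k) x y u v)
        (fun x y u v => pd_y (f1_xd k) x y u v - pd_xd (f1_y k) x y u v)
        (fun x y u v => pd_y (f1_yd k) x y u v - pd_yd (f1_y k) x y u v)
        (fun x y u v => pd_xd (f1_yd k) x y u v - pd_yd (f1_xd k) x y u v).

Definition form1_has_partials_on (W : Dom4) (k : form1) : Prop :=
  has_partials_on W (f1_x k) /\ has_partials_on W (f1_y k) /\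
  has_partials_on W (f1_xd k) /\ has_partials_on W (f1_yd k).

Definition form2_eq_on (W : Dom4) (a b : form2) : Prop :=
  forall x y u v, W x y u v ->
    f2_xy a x y u v = f2_xy b x y u v /\ f2_xxd a x y u v = f2_xxd b x y u v /\
    f2_xyd a x y u v = f2_xyd b x y u v /\ f2_yxd a x y u v = f2_yxd b x y u v /\
    f2_yyd a x y u v = f2_yyd b x y u v /\ f2_xdyd a x y u v = f2_xdyd b x y u v.

Definition alpha' (Ax Ay Bxx Bxy Byy : F4) : form2 :=
  Form2 (fun x y u v => / 2 * Dfun Ax Ay x y u v)
        Bxx Bxy Bxy Byy (fun _ _ _ _ => 0).

Definition omega (Ax Ay : F4) : form2 :=
  Form2 (fun x y _ _ => / 2 * Dfun Ax Ay x y 0 0)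
        (fun _ _ _ _ => 0) (fun _ _ _ _ => 0) (fun _ _ _ _ => 0)
        (fun _ _ _ _ => 0) (fun _ _ _ _ => 0).

Definition kappa (Bxx Bxy Byy : F4) : form1 :=
  Form1 (fun x y xd yd => - (Rint (fun nu => Bxx x y nu yd) 0 xd
                             + Rint (fun s => Bxy x y 0 s) 0 yd))
        (fun x y xd yd => - (Rint (fun nu => Bxy x y nu yd) 0 xd
                             + Rint (fun s => Byy x y 0 s) 0 yd))
        (fun _ _ _ _ => 0) (fun _ _ _ _ => 0).

(** Everything is a pointwise identity on the chart domain
    W, an open subset of R^4 with coordinates (x, y, xd, yd).
    - The coefficients of kappa are sums of segment integrals of the B's. *)

From Stdlib Require Import Reals Lra ClassicalEpsilon.
From Coquelicot Require Import Coquelicot.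
Open Scope R_scope.

(** Points of R^4 and coordinate-wise access, so that one argument covers
    all four partial derivatives. *)
Definition point := (R * R * R * R)%type.
Inductive idx := Ix | Iy | Ixd | Iyd.

Definition coord (i : idx) (p : point) : R :=
  match p with (x, y, u, v) =>
    match i with Ix => x | Iy => y | Ixd => u | Iyd => v end end.

Definition with_coord (i : idx) (t : R) (p : point) : point :=
  match p with (x, y, u, v) =>
    match i with
    | Ix => (t, y, u, v) | Iy => (x, t, u, v)
    | Ixd => (x, y, t, v) | Iyd => (x, y, u, t)
    end end.

Definition ev (f : F4) (p : point) : R := match p with (x, y, u, v) => f x y u v end.
Definition inW (W : Dom4) (p : point) : Prop := match p with (x, y, u, v) => W x y u v end.

Definition pd (i : idx) (f : F4) : F4 :=
  match i with Ix => pd_x f | Iy => pd_y f | Ixd => pd_xd f | Iyd => pd_yd f end.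

Definition kron (i j : idx) : R :=
  match i, j with
  | Ix, Ix | Iy, Iy | Ixd, Ixd | Iyd, Iyd => 1
  | _, _ => 0
  end.

Ltac by_coords :=
  repeat match goal with
  | q : point |- _ => destruct q as [[[? ?] ?] ?]
  | i : idx |- _ => destruct i
  end; simpl; try congruence; try reflexivity.

Ltac simpl_coords := cbn [ev with_coord coord pd inW] in *.

Lemma idx_dec (i j : idx) : {i = j} + {i <> j}.
Proof. decide equality. Qed.

Lemma coord_with i t p : coord i (with_coord i t p) = t.
Proof. by_coords. Qed.

Lemma coord_with_ne i j t p : i <> j -> coord i (with_coord j t p) = coord i p.
Proof. by_coords. Qed.

Lemma with_with i t s p : with_coord i t (with_coord i s p) = with_coord i t p.
Proof. by_coords. Qed.

Lemma with_coord_id i p : with_coord i (coord i p) p = p.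
Proof. by_coords. Qed.

Definition close_to (d : R) (q p : point) : Prop := forall i, Rabs (coord i q - coord i p) < d.

Lemma close_to_with d i t p : 0 < d -> Rabs (t - coord i p) < d -> close_to d (with_coord i t p) p.
Proof.
  intros Hd Ht j. destruct (idx_dec j i) as [->|n].
  - rewrite coord_with; auto.
  - rewrite coord_with_ne; auto. unfold Rminus; rewrite Rplus_opp_r, Rabs_R0; auto.
Qed.

Lemma close_to_with2 d i j a b p : i <> j -> 0 < d ->
  Rabs (a - coord i p) < d -> Rabs (b - coord j p) < d ->
  close_to d (with_coord i a (with_coord j b p)) p.
Proof.
  intros n Hd Ha Hb k. destruct (idx_dec k i) as [->|n1].
  - rewrite coord_with; auto.
  - rewrite coord_with_ne; auto. destruct (idx_dec k j) as [->|n2].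
    + rewrite coord_with; auto.
    + rewrite coord_with_ne; auto. unfold Rminus; rewrite Rplus_opp_r, Rabs_R0; auto.
Qed.

(** Specialisations of Coquelicot's derivative rules to real functions,
    stated with [+], unary [-] and [*] so that they apply by unification. *)
Lemma is_derive_plusR (f g : R -> R) (x a b : R) : is_derive f x a -> is_derive g x b ->
  is_derive (fun t => f t + g t) x (a + b).
Proof. intros; apply (is_derive_plus f g x a b); auto. Qed.

Lemma is_derive_oppR (f : R -> R) (x a : R) : is_derive f x a -> is_derive (fun t => - f t) x (- a).
Proof. intros; apply (is_derive_opp f x a); auto. Qed.

Lemma is_derive_multR (f g : R -> R) (x a b : R) : is_derive f x a -> is_derive g x b ->
  is_derive (fun t => f t * g t) x (a * g x + f x * b).
Proof. intros; apply (is_derive_mult f g x a b); auto. intros; apply Rmult_comm. Qed.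

Lemma is_derive_scalR (f : R -> R) (x k a : R) : is_derive f x a ->
  is_derive (fun t => k * f t) x (k * a).
Proof. intros; apply is_derive_scal; auto. Qed.

Lemma is_derive_val (f : R -> R) (x a b : R) : is_derive f x a -> a = b -> is_derive f x b.
Proof. intros; subst; auto. Qed.

Lemma locally_of_ball (P : R -> Prop) x :
  (exists d, 0 < d /\ forall t, Rabs (t - x) < d -> P t) -> locally x P.
Proof. intros [d [Hd H]]. exists (mkposreal d Hd). intros t Ht. apply H. exact Ht. Qed.

Lemma continuous_of_eps (h : R -> R) x :
  (forall eps, 0 < eps -> exists d, 0 < d /\
     forall t, Rabs (t - x) < d -> Rabs (h t - h x) < eps) ->
  continuous h x.
Proof.
  intros H. apply filterlim_locally. intros eps. apply locally_of_ball.
  destruct (H eps (cond_pos eps)) as [d [Hd Hd']]. exists d; split; auto.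
Qed.

Lemma epsilon_derivative (g : R -> R) a l : is_derive g a l ->
  epsilon (inhabits 0) (fun l => derivable_pt_lim g a l) = l.
Proof.
  intros H. apply is_derive_Reals in H.
  assert (E : exists l, derivable_pt_lim g a l) by eauto.
  pose proof (epsilon_spec (inhabits 0) _ E) as S.
  eapply uniqueness_limite; eauto.
Qed.

Lemma pd_of_is_derive i f p l : is_derive (fun t => ev f (with_coord i t p)) (coord i p) l ->
  ev (pd i f) p = l.
Proof.
  destruct p as [[[x y] u] v]; destruct i; simpl; intros H; apply epsilon_derivative; exact H.
Qed.

Definition partials_on (W : Dom4) (f : F4) : Prop :=
  forall i p, inW W p -> ex_derive (fun t => ev f (with_coord i t p)) (coord i p).
Definition continuous_on (W : Dom4) (f : F4) : Prop :=
  forall p, inW W p -> forall eps, 0 < eps -> exists d, 0 < d /\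
    forall q, inW W q -> close_to d q p -> Rabs (ev f q - ev f p) < eps.
Definition open_dom (W : Dom4) : Prop :=
  forall p, inW W p -> exists d, 0 < d /\ forall q, close_to d q p -> inW W q.

Lemma partials_on_of_has_partials W f : has_partials_on W f -> partials_on W f.
Proof.
  intros H i [[[x y] u] v] Hp. simpl in Hp.
  destruct (H x y u v Hp) as [[l1 H1] [[l2 H2] [[l3 H3] [l4 H4]]]].
  destruct i; simpl; [exists l1|exists l2|exists l3|exists l4]; apply is_derive_Reals; auto.
Qed.

Lemma has_partials_of_partials_on W f : partials_on W f -> has_partials_on W f.
Proof.
  intros H x y u v Hp.
  destruct (H Ix (x,y,u,v) Hp) as [l1 H1]; destruct (H Iy (x,y,u,v) Hp) as [l2 H2];
  destruct (H Ixd (x,y,u,v) Hp) as [l3 H3]; destruct (H Iyd (x,y,u,v) Hp) as [l4 H4].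
  simpl in *. repeat split; [exists l1|exists l2|exists l3|exists l4]; apply is_derive_Reals; auto.
Qed.

Lemma continuous_on_of_cont W f : cont_on W f -> continuous_on W f.
Proof.
  intros H [[[x y] u] v] Hp eps He. destruct (H x y u v Hp eps He) as [d [Hd Hd']].
  exists d; split; auto. intros [[[x' y'] u'] v'] Hq Hc. simpl.
  apply Hd'; auto; [apply (Hc Ix)|apply (Hc Iy)|apply (Hc Ixd)|apply (Hc Iyd)].
Qed.

Lemma open_dom_of_open4 W : open4 W -> open_dom W.
Proof.
  intros H [[[x y] u] v] Hp. destruct (H x y u v Hp) as [d [Hd Hd']].
  exists d; split; auto. intros [[[x' y'] u'] v'] Hc. simpl.
  apply Hd'; [apply (Hc Ix)|apply (Hc Iy)|apply (Hc Ixd)|apply (Hc Iyd)].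
Qed.

(** [C^2] on W: continuous, with continuous partial derivatives of order 1
    and 2.  This is all the regularity the proof uses. *)
Definition C2_on (W : Dom4) (f : F4) : Prop :=
  continuous_on W f /\ partials_on W f /\
  (forall i, continuous_on W (pd i f) /\ partials_on W (pd i f) /\
             forall j, continuous_on W (pd j (pd i f))).

Lemma C2_of_smooth W f : smooth_on W f -> C2_on W f.
Proof.
  intros H. specialize (H 2%nat). simpl in H.
  destruct H as [c0 [h0 [[c1 [h1 [d11 [d12 [d13 d14]]]]] [[c2 [h2 [d21 [d22 [d23 d24]]]]]
     [[c3 [h3 [d31 [d32 [d33 d34]]]]] [c4 [h4 [d41 [d42 [d43 d44]]]]]]]]]].
  split; [apply continuous_on_of_cont; auto|]. split; [apply partials_on_of_has_partials; auto|].
  intros i; destruct i; simpl;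
    (split; [apply continuous_on_of_cont; auto|]);
    (split; [apply partials_on_of_has_partials; auto|]);
    intros j; destruct j; simpl; apply continuous_on_of_cont; auto.
Qed.


Section C2_projections.
Variables (W : Dom4) (f : F4).
Hypothesis Hf : C2_on W f.
Lemma C2_continuous : continuous_on W f.
Proof. exact (proj1 Hf). Qed.
Lemma C2_partials : partials_on W f.
Proof. exact (proj1 (proj2 Hf)). Qed.
Lemma C2_pd_continuous i : continuous_on W (pd i f).
Proof. exact (proj1 (proj2 (proj2 Hf) i)). Qed.
Lemma C2_pd_partials i : partials_on W (pd i f).
Proof. exact (proj1 (proj2 (proj2 (proj2 Hf) i))). Qed.
Lemma C2_pd2_continuous i j : continuous_on W (pd j (pd i f)).
Proof. exact (proj2 (proj2 (proj2 (proj2 Hf) i)) j). Qed.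
End C2_projections.

Lemma ball_in_dom W i p : open_dom W -> inW W p ->
  exists d, 0 < d /\ forall t, Rabs (t - coord i p) < d -> inW W (with_coord i t p).
Proof.
  intros Ho Hp. destruct (Ho p Hp) as [d [Hd H]]. exists d; split; auto.
  intros t Ht. apply H. apply close_to_with; auto.
Qed.

Lemma locally_in_dom W i p : open_dom W -> inW W p ->
  locally (coord i p) (fun t => inW W (with_coord i t p)).
Proof. intros Ho Hp. apply locally_of_ball. apply ball_in_dom; auto. Qed.

Lemma slice_continuous W f i p : open_dom W -> continuous_on W f -> inW W p ->
  continuous (fun t => ev f (with_coord i t p)) (coord i p).
Proof.
  intros Ho Hc Hp. apply continuous_of_eps. intros eps He.
  destruct (Hc p Hp eps He) as [d1 [Hd1 H1]]. destruct (Ho p Hp) as [d2 [Hd2 H2]].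
  exists (Rmin d1 d2); split; [apply Rmin_pos; auto|].
  intros t Ht. rewrite with_coord_id. apply H1.
  - apply H2. apply close_to_with; auto. eapply Rlt_le_trans; eauto. apply Rmin_r.
  - apply close_to_with; auto. eapply Rlt_le_trans; eauto. apply Rmin_l.
Qed.

Lemma slice_continuous_at W f k p z : open_dom W -> continuous_on W f ->
  inW W (with_coord k z p) -> continuous (fun t => ev f (with_coord k t p)) z.
Proof.
  intros Ho Hc Hz. pose proof (slice_continuous W f k (with_coord k z p) Ho Hc Hz) as H.
  rewrite coord_with in H. eapply continuous_ext; [|exact H].
  intros t; simpl. rewrite with_with; auto.
Qed.

Lemma is_derive_pd W f i p : partials_on W f -> inW W p ->
  is_derive (fun t => ev f (with_coord i t p)) (coord i p) (ev (pd i f) p).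
Proof.
  intros He Hp. destruct (He i p Hp) as [l Hl].
  rewrite (pd_of_is_derive i f p l Hl). exact Hl.
Qed.

Lemma pd_of_local_expr W f (G : point -> R) i p l : open_dom W -> inW W p ->
  (forall q, inW W q -> ev f q = G q) ->
  is_derive (fun t => G (with_coord i t p)) (coord i p) l -> ev (pd i f) p = l.
Proof.
  intros Ho Hp HG Hd. apply pd_of_is_derive. eapply is_derive_ext_loc; [|exact Hd].
  generalize (locally_in_dom W i p Ho Hp). apply filter_imp.
  intros t Ht. symmetry. apply HG; auto.
Qed.

Lemma pd_congr_on W f g i p : open_dom W -> partials_on W g -> inW W p ->
  (forall q, inW W q -> ev f q = ev g q) -> ev (pd i f) p = ev (pd i g) p.
Proof.
  intros Ho Hg Hp Hfg. apply (pd_of_local_expr W f (ev g)); auto. apply (is_derive_pd W); auto.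
Qed.

Lemma partials_on_zero W : partials_on W (fun _ _ _ _ => 0).
Proof.
  intros i p Hp. exists 0. eapply is_derive_ext; [|apply (is_derive_const 0)].
  intros t; by_coords.
Qed.

Lemma pd_zero i p : ev (pd i (fun _ _ _ _ => 0)) p = 0.
Proof.
  apply pd_of_is_derive. eapply is_derive_ext; [|apply (is_derive_const 0)]. intros t; by_coords.
Qed.

Lemma is_derive_coord i j p :
  is_derive (fun t => coord j (with_coord i t p)) (coord i p) (kron i j).
Proof.
  destruct i, j; destruct p as [[[x y] u] v]; simpl;
    first [exact (is_derive_id _) | exact (is_derive_const _ _)].
Qed.

Lemma mixed_derive_slice W f i j p a b : open_dom W -> C2_on W f -> i <> j ->
  inW W (with_coord i a (with_coord j b p)) ->
  Derive (fun z => Derive (fun t => ev f (with_coord i z (with_coord j t p))) b) a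
  = ev (pd i (pd j f)) (with_coord i a (with_coord j b p)).
Proof.
  intros Ho HC n Hq. set (q := with_coord i a (with_coord j b p)) in *.
  assert (Gi : coord i q = a) by (unfold q; clear -n; by_coords).
  assert (Gj : forall z, coord j (with_coord i z q) = b) by (intros; unfold q; clear -n; by_coords).
  rewrite (Derive_ext_loc _ (fun z => ev (pd j f) (with_coord i z q))).
  - rewrite <- Gi at 1. apply is_derive_unique, (is_derive_pd W); auto.
    apply (C2_pd_partials W f HC j).
  - rewrite <- Gi. generalize (locally_in_dom W i q Ho Hq). apply filter_imp. intros z Hz.
    apply is_derive_unique. rewrite <- (Gj z) at 1.
    eapply is_derive_ext; [|apply (is_derive_pd W); eauto using C2_partials].
    intros t. cbv beta. f_equal. unfold q; clear -n; by_coords.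
Qed.

Lemma continuity_2d_of_slices W g i j p d (H : R -> R -> R) :
  continuous_on W g -> inW W p -> i <> j -> 0 < d ->
  (forall a b, Rabs (a - coord i p) < d -> Rabs (b - coord j p) < d ->
     inW W (with_coord i a (with_coord j b p))) ->
  (forall a b, Rabs (a - coord i p) < d -> Rabs (b - coord j p) < d ->
     H a b = ev g (with_coord i a (with_coord j b p))) ->
  continuity_2d_pt H (coord i p) (coord j p).
Proof.
  intros Hc Hp n Hd HW HH eps. destruct (Hc p Hp eps (cond_pos eps)) as [d1 [Hd1 H1]].
  assert (Hm : 0 < Rmin d d1) by (apply Rmin_pos; auto).
  exists (mkposreal _ Hm). simpl. intros a b Ha Hb.
  assert (Ep : with_coord i (coord i p) (with_coord j (coord j p) p) = p) by (clear -n; by_coords).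
  rewrite HH, HH, Ep. 2,3: unfold Rminus; rewrite Rplus_opp_r, Rabs_R0; auto.
  2,3: eapply Rlt_le_trans; eauto; apply Rmin_l.
  apply H1. apply HW; eapply Rlt_le_trans; eauto; apply Rmin_l.
  apply close_to_with2; auto; eapply Rlt_le_trans; eauto; apply Rmin_r.
Qed.

Lemma slice2_derivable W f i j p a b : open_dom W -> C2_on W f -> i <> j ->
  inW W (with_coord i a (with_coord j b p)) ->
  let h := fun a b => ev f (with_coord i a (with_coord j b p)) in
  ex_derive (fun z => h z b) a /\ ex_derive (fun z => h a z) b /\
  ex_derive (fun z => Derive (fun t => h z t) b) a /\
  ex_derive (fun z => Derive (fun t => h t z) a) b.
Proof.
  intros Ho HC n Hq h. set (q := with_coord i a (with_coord j b p)) in Hq.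
  assert (Gi : coord i q = a) by (unfold q; clear -n; by_coords).
  assert (Gj : coord j q = b) by (unfold q; clear -n; by_coords).
  assert (Xij : forall z t, h z t = ev f (with_coord j t (with_coord i z q)))
    by (intros; unfold h, q; clear -n; by_coords).
  assert (Xji : forall z t, h z t = ev f (with_coord i z (with_coord j t q)))
    by (intros; unfold h, q; clear -n; by_coords).
  assert (Xi : forall z, h z b = ev f (with_coord i z q))
    by (intros; unfold h, q; clear -n; by_coords).
  assert (Xj : forall z, h a z = ev f (with_coord j z q))
    by (intros; unfold h, q; clear -n; by_coords).
  pose proof (C2_partials W f HC) as He.
  split; [|split; [|split]].
  - apply (ex_derive_ext (fun z => ev f (with_coord i z q))); [intros z; symmetry; apply Xi|].
    rewrite <- Gi. apply He; auto.
  - apply (ex_derive_ext (fun z => ev f (with_coord j z q))); [intros z; symmetry; apply Xj|].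
    rewrite <- Gj. apply He; auto.
  - apply (ex_derive_ext_loc (fun z => ev (pd j f) (with_coord i z q))).
    + rewrite <- Gi. generalize (locally_in_dom W i q Ho Hq). apply filter_imp. intros z Hz.
      symmetry. apply is_derive_unique.
      apply (is_derive_ext (fun t => ev f (with_coord j t (with_coord i z q))));
        [intros t; symmetry; apply Xij|].
      replace b with (coord j (with_coord i z q)) at 1 by (rewrite coord_with_ne; auto).
      apply (is_derive_pd W); auto.
    + rewrite <- Gi. apply (C2_pd_partials W f HC j); auto.
  - apply (ex_derive_ext_loc (fun z => ev (pd i f) (with_coord j z q))).
    + rewrite <- Gj. generalize (locally_in_dom W j q Ho Hq). apply filter_imp. intros z Hz.
      symmetry. apply is_derive_unique.
      apply (is_derive_ext (fun t => ev f (with_coord i t (with_coord j z q))));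
        [intros t; symmetry; apply Xji|].
      replace a with (coord i (with_coord j z q)) at 1 by (rewrite coord_with_ne; auto).
      apply (is_derive_pd W); auto.
    + rewrite <- Gj. apply (C2_pd_partials W f HC i); auto.
Qed.

Lemma pd_comm W f i j p : open_dom W -> C2_on W f -> inW W p -> i <> j ->
  ev (pd i (pd j f)) p = ev (pd j (pd i f)) p.
Proof.
  intros Ho HC Hp n.
  set (h := fun a b => ev f (with_coord i a (with_coord j b p))).
  assert (Dij : forall a b, inW W (with_coord i a (with_coord j b p)) ->
     Derive (fun z => Derive (fun t => h z t) b) a
     = ev (pd i (pd j f)) (with_coord i a (with_coord j b p)))
    by (intros a b; apply (mixed_derive_slice W); auto).
  assert (Dji : forall a b, inW W (with_coord j a (with_coord i b p)) ->
     Derive (fun z => Derive (fun t => h t z) b) a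
     = ev (pd j (pd i f)) (with_coord j a (with_coord i b p))).
  { intros a b Hab. rewrite <- (mixed_derive_slice W f j i p a b); auto.
    apply Derive_ext. intros z. apply Derive_ext. intros t. unfold h. f_equal. clear -n; by_coords. }
  assert (Ep1 : with_coord i (coord i p) (with_coord j (coord j p) p) = p) by (clear -n; by_coords).
  assert (Ep2 : with_coord j (coord j p) (with_coord i (coord i p) p) = p) by (clear -n; by_coords).
  assert (L1 := Dij (coord i p) (coord j p) ltac:(rewrite Ep1; auto)). rewrite Ep1 in L1.
  assert (L2 := Dji (coord j p) (coord i p) ltac:(rewrite Ep2; auto)). rewrite Ep2 in L2.
  rewrite <- L1, <- L2.
  destruct (Ho p Hp) as [d [Hd Hdp]].
  assert (Box : forall a b, Rabs (a - coord i p) < d -> Rabs (b - coord j p) < d ->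
     inW W (with_coord i a (with_coord j b p)) /\ inW W (with_coord j b (with_coord i a p))).
  { intros a b Ha Hb.
    replace (with_coord j b (with_coord i a p)) with (with_coord i a (with_coord j b p))
      by (clear -n; by_coords).
    split; apply Hdp; apply close_to_with2; auto. }
  apply Schwarz.
  - exists (mkposreal d Hd). intros a b Ha Hb.
    exact (slice2_derivable W f i j p a b Ho HC n (proj1 (Box a b Ha Hb))).
  - apply (continuity_2d_of_slices W (pd i (pd j f)) i j p d); auto.
    + apply (C2_pd2_continuous W f HC).
    + intros a b Ha Hb; apply Box; auto.
    + intros a b Ha Hb. apply Dij. apply Box; auto.
  - apply (continuity_2d_of_slices W (pd j (pd i f)) i j p d); auto.
    + apply (C2_pd2_continuous W f HC).
    + intros a b Ha Hb; apply Box; auto.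
    + intros a b Ha Hb. rewrite Dji by (apply Box; auto). f_equal. clear -n; by_coords.
Qed.

Lemma is_derive_affine_in_velocity W f h g1 g2 a c k p :
  open_dom W -> inW W p -> partials_on W h -> partials_on W g1 -> partials_on W g2 ->
  (forall q, inW W q ->
     ev f q = a * ev h q + c * (coord Ixd q * ev g1 q + coord Iyd q * ev g2 q)) ->
  is_derive (fun t => ev f (with_coord k t p)) (coord k p)
    (a * ev (pd k h) p
     + c * ((kron k Ixd * ev g1 p + coord Ixd p * ev (pd k g1) p)
            + (kron k Iyd * ev g2 p + coord Iyd p * ev (pd k g2) p))).
Proof.
  intros Ho Hp Hh Hg1 Hg2 Hf.
  apply (is_derive_ext_loc (fun t => a * ev h (with_coord k t p)
     + c * (coord Ixd (with_coord k t p) * ev g1 (with_coord k t p)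
            + coord Iyd (with_coord k t p) * ev g2 (with_coord k t p)))).
  - generalize (locally_in_dom W k p Ho Hp). apply filter_imp.
    intros t Ht. symmetry. apply Hf; auto.
  - eapply is_derive_val.
    + apply is_derive_plusR; [apply is_derive_scalR, (is_derive_pd W); auto|].
      apply is_derive_scalR, is_derive_plusR;
        (apply is_derive_multR; [apply is_derive_coord | apply (is_derive_pd W); auto]).
    + cbv beta. rewrite !with_coord_id. reflexivity.
Qed.

Section Helmholtz.
Variables (W : Dom4) (Ax Ay Bxx Bxy Byy : F4).
Hypothesis Ho : open_dom W.
Hypotheses (HAx : C2_on W Ax) (HAy : C2_on W Ay)
           (HBxx : C2_on W Bxx) (HBxy : C2_on W Bxy) (HByy : C2_on W Byy).
Hypothesis Hh : helmholtz W Ax Ay Bxx Bxy Byy.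

(** The Helmholtz conditions used below, in coordinate form; the third to
    fifth are written in the shape of [is_derive_affine_in_velocity]. *)
Lemma helm_Bxx_Bxy q : inW W q -> ev (pd Iyd Bxx) q = ev (pd Ixd Bxy) q.
Proof. destruct q as [[[x y] u] v]; intros Hq; apply (Hh x y u v Hq). Qed.

Lemma helm_Byy_Bxy q : inW W q -> ev (pd Ixd Byy) q = ev (pd Iyd Bxy) q.
Proof. destruct q as [[[x y] u] v]; intros Hq; apply (Hh x y u v Hq). Qed.

Lemma helm_Ax q : inW W q -> ev (pd Ixd Ax) q
  = 0 * ev Ax q + 1 * (coord Ixd q * ev (pd Ix Bxx) q + coord Iyd q * ev (pd Iy Bxx) q).
Proof.
  destruct q as [[[x y] u] v]; intros Hq; simpl.
  destruct (Hh x y u v Hq) as [_ [_ [H _]]]. lra.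
Qed.

Lemma helm_Ay q : inW W q -> ev (pd Iyd Ay) q
  = 0 * ev Ay q + 1 * (coord Ixd q * ev (pd Ix Byy) q + coord Iyd q * ev (pd Iy Byy) q).
Proof.
  destruct q as [[[x y] u] v]; intros Hq; simpl.
  destruct (Hh x y u v Hq) as [_ [_ [_ [H _]]]]. lra.
Qed.

Lemma helm_D_by_Ax q : inW W q -> ev (Dfun Ax Ay) q
  = 2 * ev (pd Iyd Ax) q + (-2) * (coord Ixd q * ev (pd Ix Bxy) q + coord Iyd q * ev (pd Iy Bxy) q).
Proof.
  destruct q as [[[x y] u] v]; intros Hq; simpl.
  destruct (Hh x y u v Hq) as [_ [_ [_ [_ [H _]]]]]. unfold Dfun. lra.
Qed.

Lemma helm_D_by_Ay q : inW W q -> ev (Dfun Ax Ay) q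
  = (-2) * ev (pd Ixd Ay) q + 2 * (coord Ixd q * ev (pd Ix Bxy) q + coord Iyd q * ev (pd Iy Bxy) q).
Proof.
  destruct q as [[[x y] u] v]; intros Hq; simpl.
  destruct (Hh x y u v Hq) as [_ [_ [_ [_ [H _]]]]]. unfold Dfun. lra.
Qed.

Lemma D_deriv_xd p : inW W p ->
  is_derive (fun t => ev (Dfun Ax Ay) (with_coord Ixd t p)) (coord Ixd p)
    (2 * (ev (pd Iy Bxx) p - ev (pd Ix Bxy) p)).
Proof.
  intros Hp.
  (* d/dxd d/dyd Ax, by Schwarz and the third Helmholtz condition *)
  assert (EAx : ev (pd Ixd (pd Iyd Ax)) p
    = 0 * ev (pd Iyd Ax) p + 1 * ((0 * ev (pd Ix Bxx) p + coord Ixd p * ev (pd Iyd (pd Ix Bxx)) p)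
        + (1 * ev (pd Iy Bxx) p + coord Iyd p * ev (pd Iyd (pd Iy Bxx)) p))).
  { rewrite (pd_comm W Ax Ixd Iyd p Ho HAx Hp ltac:(discriminate)).
    apply pd_of_is_derive.
    exact (is_derive_affine_in_velocity W _ Ax _ _ 0 1 Iyd p Ho Hp (C2_partials W Ax HAx)
             (C2_pd_partials W Bxx HBxx Ix) (C2_pd_partials W Bxx HBxx Iy) helm_Ax). }
  (* d/dyd d/dz Bxx = d/dxd d/dz Bxy for z = x, y, by the first Helmholtz condition *)
  assert (EB : forall z, z <> Iyd -> z <> Ixd ->
            ev (pd Iyd (pd z Bxx)) p = ev (pd Ixd (pd z Bxy)) p).
  { intros z Hz Hz'.
    rewrite (pd_comm W Bxx Iyd z p Ho HBxx Hp (not_eq_sym Hz)),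
            (pd_comm W Bxy Ixd z p Ho HBxy Hp (not_eq_sym Hz')).
    apply (pd_congr_on W); auto using C2_pd_partials, helm_Bxx_Bxy. }
  eapply is_derive_val.
  - exact (is_derive_affine_in_velocity W _ _ _ _ 2 (-2) Ixd p Ho Hp (C2_pd_partials W Ax HAx Iyd)
             (C2_pd_partials W Bxy HBxy Ix) (C2_pd_partials W Bxy HBxy Iy) helm_D_by_Ax).
  - cbn [kron]. rewrite EAx, (EB Ix), (EB Iy) by discriminate. ring.
Qed.

Lemma D_deriv_yd p : inW W p ->
  is_derive (fun t => ev (Dfun Ax Ay) (with_coord Iyd t p)) (coord Iyd p)
    (2 * (ev (pd Iy Bxy) p - ev (pd Ix Byy) p)).
Proof.
  intros Hp.
  (* d/dyd d/dxd Ay, by Schwarz and the fourth Helmholtz condition *)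
  assert (EAy : ev (pd Iyd (pd Ixd Ay)) p
    = 0 * ev (pd Ixd Ay) p + 1 * ((1 * ev (pd Ix Byy) p + coord Ixd p * ev (pd Ixd (pd Ix Byy)) p)
        + (0 * ev (pd Iy Byy) p + coord Iyd p * ev (pd Ixd (pd Iy Byy)) p))).
  { rewrite (pd_comm W Ay Iyd Ixd p Ho HAy Hp ltac:(discriminate)).
    apply pd_of_is_derive.
    exact (is_derive_affine_in_velocity W _ Ay _ _ 0 1 Ixd p Ho Hp (C2_partials W Ay HAy)
             (C2_pd_partials W Byy HByy Ix) (C2_pd_partials W Byy HByy Iy) helm_Ay). }
  (* d/dxd d/dz Byy = d/dyd d/dz Bxy for z = x, y, by the second Helmholtz condition *)
  assert (EB : forall z, z <> Iyd -> z <> Ixd ->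
            ev (pd Ixd (pd z Byy)) p = ev (pd Iyd (pd z Bxy)) p).
  { intros z Hz Hz'.
    rewrite (pd_comm W Byy Ixd z p Ho HByy Hp (not_eq_sym Hz')),
            (pd_comm W Bxy Iyd z p Ho HBxy Hp (not_eq_sym Hz)).
    apply (pd_congr_on W); auto using C2_pd_partials, helm_Byy_Bxy. }
  eapply is_derive_val.
  - exact (is_derive_affine_in_velocity W _ _ _ _ (-2) 2 Iyd p Ho Hp (C2_pd_partials W Ay HAy Ixd)
             (C2_pd_partials W Bxy HBxy Ix) (C2_pd_partials W Bxy HBxy Iy) helm_D_by_Ay).
  - cbn [kron]. rewrite EAy, (EB Ix), (EB Iy) by discriminate. ring.
Qed.

End Helmholtz.

Lemma Rint_eq_RInt f a b : ex_RInt f a b -> Rint f a b = RInt f a b.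
Proof.
  intros H. unfold Rint. apply ex_RInt_Reals_0 in H.
  assert (E : exists l, exists pr : Riemann_integrable f a b, RiemannInt pr = l)
    by (exists (RiemannInt H), H; reflexivity).
  destruct (epsilon_spec (inhabits 0) _ E) as [pr Hpr]. rewrite <- Hpr. symmetry. apply RInt_Reals.
Qed.

Lemma segment_param c nu : Rmin 0 c <= nu <= Rmax 0 c -> exists s, 0 <= s <= 1 /\ nu = s * c.
Proof.
  intros [H1 H2]. destruct (Rtotal_order c 0) as [Hc|[Hc|Hc]].
  - rewrite Rmin_right in H1 by lra. rewrite Rmax_left in H2 by lra.
    assert (Hi : c * / c = 1) by (field; lra).
    assert (Hn : / c < 0) by (apply Rinv_lt_0_compat; lra).
    exists (nu * / c). split; [split; nra|field; lra].
  - subst. rewrite Rmin_left, Rmax_left in * by lra. exists 0. lra.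
  - rewrite Rmin_left in H1 by lra. rewrite Rmax_right in H2 by lra.
    assert (Hi : c * / c = 1) by (field; lra).
    assert (Hn : 0 < / c) by (apply Rinv_0_lt_compat; lra).
    exists (nu * / c). split; [split; nra|field; lra].
Qed.

Lemma seg_xd_in_dom W q nu : segment_domain W -> inW W q ->
  Rmin 0 (coord Ixd q) <= nu <= Rmax 0 (coord Ixd q) -> inW W (with_coord Ixd nu q).
Proof.
  intros Hs Hq Hn. destruct q as [[[x y] u] v]; simpl_coords.
  destruct (segment_param u nu Hn) as [s [Hs1 ->]]. apply (Hs x y u v Hq s Hs1).
Qed.

Lemma seg_yd_in_dom W q nu : segment_domain W -> inW W q ->
  Rmin 0 (coord Iyd q) <= nu <= Rmax 0 (coord Iyd q) ->
  inW W (with_coord Iyd nu (with_coord Ixd 0 q)).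
Proof.
  intros Hs Hq Hn. destruct q as [[[x y] u] v]; simpl_coords.
  destruct (segment_param v nu Hn) as [s [Hs1 ->]]. apply (Hs x y u v Hq s Hs1).
Qed.

Lemma seg_xd_near W i p : i <> Ixd -> open_dom W -> segment_domain W -> inW W p ->
  exists d, 0 < d /\ forall t, Rabs (t - coord i p) < d ->
    forall nu, Rmin 0 (coord Ixd p) <= nu <= Rmax 0 (coord Ixd p) ->
    inW W (with_coord Ixd nu (with_coord i t p)).
Proof.
  intros n Ho Hs Hp. destruct (ball_in_dom W i p Ho Hp) as [d [Hd H]]. exists d; split; auto.
  intros t Ht nu Hnu. apply seg_xd_in_dom; auto. rewrite coord_with_ne; auto.
Qed.

Lemma seg_xd_near_bound W p : open_dom W -> segment_domain W -> inW W p ->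
  exists d, 0 < d /\ forall c, Rabs (c - coord Ixd p) < d ->
    forall nu, Rmin 0 c <= nu <= Rmax 0 c -> inW W (with_coord Ixd nu p).
Proof.
  intros Ho Hs Hp. destruct (ball_in_dom W Ixd p Ho Hp) as [d [Hd H]]. exists d; split; auto.
  intros c Hc nu Hnu. rewrite <- (with_with Ixd nu c p).
  apply seg_xd_in_dom; auto. rewrite coord_with; auto.
Qed.

Lemma seg_yd_near W i p : i <> Ixd -> i <> Iyd -> open_dom W -> segment_domain W -> inW W p ->
  exists d, 0 < d /\ forall t, Rabs (t - coord i (with_coord Ixd 0 p)) < d ->
    forall nu, Rmin 0 (coord Iyd p) <= nu <= Rmax 0 (coord Iyd p) ->
    inW W (with_coord Iyd nu (with_coord i t (with_coord Ixd 0 p))).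
Proof.
  intros n n' Ho Hs Hp. destruct (ball_in_dom W i p Ho Hp) as [d [Hd H]]. exists d; split; auto.
  intros t Ht nu Hnu. rewrite coord_with_ne in Ht by auto.
  replace (with_coord Iyd nu (with_coord i t (with_coord Ixd 0 p)))
    with (with_coord Iyd nu (with_coord Ixd 0 (with_coord i t p))) by (clear -n n'; by_coords).
  apply seg_yd_in_dom; auto. rewrite coord_with_ne; auto.
Qed.

Lemma seg_yd_near_bound W p : open_dom W -> segment_domain W -> inW W p ->
  exists d, 0 < d /\ forall c, Rabs (c - coord Iyd p) < d ->
    forall nu, Rmin 0 c <= nu <= Rmax 0 c -> inW W (with_coord Iyd nu (with_coord Ixd 0 p)).
Proof.
  intros Ho Hs Hp. destruct (ball_in_dom W Iyd p Ho Hp) as [d [Hd H]]. exists d; split; auto.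
  intros c Hc nu Hnu.
  replace (with_coord Iyd nu (with_coord Ixd 0 p))
    with (with_coord Iyd nu (with_coord Ixd 0 (with_coord Iyd c p))) by (clear; by_coords).
  apply seg_yd_in_dom; auto. rewrite coord_with; auto.
Qed.

Definition slice_int (k : idx) (f : F4) (p0 : point) (b : R) : R :=
  RInt (fun nu => ev f (with_coord k nu p0)) 0 b.

Lemma ex_RInt_slice W f k p0 b : open_dom W -> continuous_on W f ->
  (forall nu, Rmin 0 b <= nu <= Rmax 0 b -> inW W (with_coord k nu p0)) ->
  ex_RInt (fun nu => ev f (with_coord k nu p0)) 0 b.
Proof.
  intros Ho Hc Hs. apply (ex_RInt_continuous (V:=R_CompleteNormedModule)).
  intros z Hz. apply (slice_continuous_at W); auto.
Qed.

Lemma is_derive_slice_int_param W f i k p0 b :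
  open_dom W -> continuous_on W f -> partials_on W f -> continuous_on W (pd i f) -> i <> k ->
  (exists d, 0 < d /\ forall t, Rabs (t - coord i p0) < d ->
     forall nu, Rmin 0 b <= nu <= Rmax 0 b -> inW W (with_coord k nu (with_coord i t p0))) ->
  is_derive (fun t => slice_int k f (with_coord i t p0) b) (coord i p0) (slice_int k (pd i f) p0 b).
Proof.
  intros Ho Hc He Hci n [d [Hd Hs]]. unfold slice_int.
  set (F := fun a nu => ev f (with_coord k nu (with_coord i a p0))).
  assert (dF : forall a nu, inW W (with_coord k nu (with_coord i a p0)) ->
             is_derive (fun z => F z nu) a (ev (pd i f) (with_coord k nu (with_coord i a p0)))).
  { intros a nu Hq.
    replace a with (coord i (with_coord k nu (with_coord i a p0))) at 1 by (clear -n; by_coords).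
    eapply is_derive_ext; [|apply (is_derive_pd W); eauto]. intros z. unfold F. simpl.
    f_equal. clear -n; by_coords. }
  assert (Ep : with_coord i (coord i p0) p0 = p0) by apply with_coord_id.
  assert (Hd0 : Rabs (coord i p0 - coord i p0) < d)
    by (unfold Rminus; rewrite Rplus_opp_r, Rabs_R0; auto).
  eapply is_derive_val.
  - apply (is_derive_RInt_param F 0 b (coord i p0)).
    + apply locally_of_ball. exists d; split; auto. intros a Ha t Ht.
      eexists. apply dF, Hs; auto.
    + intros t Ht. set (q0 := with_coord k t p0).
      assert (Hq0 : inW W q0) by (unfold q0; rewrite <- Ep; apply Hs; auto).
      destruct (Ho q0 Hq0) as [d1 [Hd1 Hb]].
      assert (E1 : coord i q0 = coord i p0) by (unfold q0; rewrite coord_with_ne; auto).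
      assert (E2 : coord k q0 = t) by (unfold q0; apply coord_with).
      rewrite <- E1, <- E2.
      apply (continuity_2d_of_slices W (pd i f) i k q0 d1); auto.
      * intros a c Ha Hc'. apply Hb. apply close_to_with2; auto.
      * intros a c Ha Hc'. apply is_derive_unique.
        replace (with_coord i a (with_coord k c q0)) with (with_coord k c (with_coord i a p0))
          by (unfold q0; clear -n; by_coords).
        apply dF. replace (with_coord k c (with_coord i a p0)) with (with_coord i a (with_coord k c q0))
          by (unfold q0; clear -n; by_coords).
        apply Hb. apply close_to_with2; auto.
    + apply locally_of_ball. exists d; split; auto. intros a Ha.
      apply (ex_RInt_slice W); auto.
  - apply RInt_ext. intros nu Hnu. apply is_derive_unique.
    pose proof (dF (coord i p0) nu) as D. rewrite Ep in D. apply D.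
    rewrite <- Ep. apply Hs; auto. lra.
Qed.

Lemma is_derive_slice_int_bound W f k p0 b0 : open_dom W -> continuous_on W f ->
  (exists d, 0 < d /\ forall c, Rabs (c - b0) < d ->
     forall nu, Rmin 0 c <= nu <= Rmax 0 c -> inW W (with_coord k nu p0)) ->
  is_derive (fun c => slice_int k f p0 c) b0 (ev f (with_coord k b0 p0)).
Proof.
  intros Ho Hc [d [Hd Hs]]. unfold slice_int.
  assert (Hd0 : Rabs (b0 - b0) < d) by (unfold Rminus; rewrite Rplus_opp_r, Rabs_R0; auto).
  apply (is_derive_RInt (fun nu => ev f (with_coord k nu p0))
                        (fun c => RInt (fun nu => ev f (with_coord k nu p0)) 0 c) 0 b0).
  - apply locally_of_ball. exists d; split; auto. intros c Hc'.
    apply (RInt_correct (V:=R_CompleteNormedModule)).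
    apply (ex_RInt_slice W f k p0 c Ho Hc). apply Hs; auto.
  - apply (slice_continuous_at W f k p0 b0 Ho Hc). apply (Hs b0); auto.
    split; [apply Rmin_r|apply Rmax_r].
Qed.

Definition int_xd (f : F4) (q : point) : R := slice_int Ixd f q (coord Ixd q).
Definition int_yd (f : F4) (q : point) : R := slice_int Iyd f (with_coord Ixd 0 q) (coord Iyd q).

(** Their partial derivatives: along the integration variable one gets the
    integrand at the endpoint, along the other coordinates the integral of
    the partial derivative (int_yd does not depend on xd). *)
Definition int_xd_pd (i : idx) (f : F4) (p : point) : R :=
  match i with Ixd => ev f p | _ => int_xd (pd i f) p end.
Definition int_yd_pd (i : idx) (f : F4) (p : point) : R :=
  match i with Ixd => 0 | Iyd => ev f (with_coord Ixd 0 p) | _ => int_yd (pd i f) p end.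

Lemma is_derive_int_xd W f i p : open_dom W -> segment_domain W -> C2_on W f -> inW W p ->
  is_derive (fun t => int_xd f (with_coord i t p)) (coord i p) (int_xd_pd i f p).
Proof.
  intros Ho Hs HC Hp. pose proof (C2_continuous W f HC) as Hc.
  destruct (idx_dec i Ixd) as [->|n].
  - pose proof (is_derive_slice_int_bound W f Ixd p (coord Ixd p) Ho Hc
                  (seg_xd_near_bound W p Ho Hs Hp)) as H.
    rewrite with_coord_id in H.
    eapply is_derive_ext; [|exact H]. intros t. unfold int_xd, slice_int. rewrite coord_with.
    apply RInt_ext. intros; rewrite with_with; auto.
  - replace (int_xd_pd i f p) with (int_xd (pd i f) p) by (destruct i; try reflexivity; congruence).
    eapply is_derive_ext;
      [|exact (is_derive_slice_int_param W f i Ixd p (coord Ixd p) Ho Hc (C2_partials W f HC)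
                 (C2_pd_continuous W f HC i) n (seg_xd_near W i p n Ho Hs Hp))].
    intros t. unfold int_xd. rewrite coord_with_ne; auto.
Qed.

Lemma is_derive_int_yd W f i p : open_dom W -> segment_domain W -> C2_on W f -> inW W p ->
  is_derive (fun t => int_yd f (with_coord i t p)) (coord i p) (int_yd_pd i f p).
Proof.
  intros Ho Hs HC Hp. pose proof (C2_continuous W f HC) as Hc.
  destruct (idx_dec i Ixd) as [->|n]; [|destruct (idx_dec i Iyd) as [->|n']].
  - eapply is_derive_ext; [|apply (is_derive_const (int_yd f p))]. intros t. by_coords.
  - pose proof (is_derive_slice_int_bound W f Iyd (with_coord Ixd 0 p) (coord Iyd p) Ho Hc
                  (seg_yd_near_bound W p Ho Hs Hp)) as H.
    replace (ev f (with_coord Iyd (coord Iyd p) (with_coord Ixd 0 p)))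
      with (ev f (with_coord Ixd 0 p)) in H by (clear; by_coords).
    eapply is_derive_ext; [|exact H]. intros t. unfold int_yd, slice_int. rewrite coord_with.
    apply RInt_ext. intros. clear; by_coords.
  - replace (int_yd_pd i f p) with (int_yd (pd i f) p) by (destruct i; try reflexivity; congruence).
    replace (coord i p) with (coord i (with_coord Ixd 0 p)) by (rewrite coord_with_ne; auto).
    eapply is_derive_ext;
      [|exact (is_derive_slice_int_param W f i Iyd (with_coord Ixd 0 p) (coord Iyd p) Ho Hc
                 (C2_partials W f HC) (C2_pd_continuous W f HC i) n'
                 (seg_yd_near W i p n n' Ho Hs Hp))].
    intros t. unfold int_yd. rewrite (coord_with_ne Iyd i) by auto. f_equal. clear -n n'; by_coords.
Qed.

(** On W, each coefficient of kappa is -(int_xd f + int_yd g) for suitable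
    f, g (the Riemann integrals exist since the integrands are continuous). *)
Lemma kappa_coef_eq W f g q : open_dom W -> segment_domain W ->
  continuous_on W f -> continuous_on W g -> inW W q ->
  ev (fun x y xd yd => - (Rint (fun nu => f x y nu yd) 0 xd + Rint (fun s => g x y 0 s) 0 yd)) q
  = - (int_xd f q + int_yd g q).
Proof.
  intros Ho Hs Hf Hg Hq. destruct q as [[[x y] u] v].
  unfold int_xd, int_yd, slice_int. simpl_coords.
  rewrite (Rint_eq_RInt (fun nu => f x y nu v) 0 u (ex_RInt_slice W f Ixd (x,y,u,v) u Ho Hf
             (fun nu Hnu => seg_xd_in_dom W (x,y,u,v) nu Hs Hq Hnu))).
  rewrite (Rint_eq_RInt (fun s => g x y 0 s) 0 v (ex_RInt_slice W g Iyd (x,y,0,v) v Ho Hg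
             (fun nu Hnu => seg_yd_in_dom W (x,y,u,v) nu Hs Hq Hnu))).
  reflexivity.
Qed.

Lemma is_derive_kappa_coef W F f g i p : open_dom W -> segment_domain W ->
  C2_on W f -> C2_on W g -> inW W p ->
  (forall q, inW W q -> ev F q = - (int_xd f q + int_yd g q)) ->
  is_derive (fun t => ev F (with_coord i t p)) (coord i p) (- (int_xd_pd i f p + int_yd_pd i g p)).
Proof.
  intros Ho Hs Hf Hg Hp HF.
  apply (is_derive_ext_loc (fun t => - (int_xd f (with_coord i t p) + int_yd g (with_coord i t p)))).
  - generalize (locally_in_dom W i p Ho Hp). apply filter_imp. intros t Ht. symmetry; apply HF; auto.
  - apply is_derive_oppR, is_derive_plusR; [apply (is_derive_int_xd W) | apply (is_derive_int_yd W)]; auto.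
Qed.

Lemma RInt_of_derive (h dh : R -> R) b :
  (forall t, Rmin 0 b <= t <= Rmax 0 b -> is_derive h t (dh t)) ->
  (forall t, Rmin 0 b <= t <= Rmax 0 b -> continuous dh t) -> RInt dh 0 b = h b - h 0.
Proof.
  intros H1 H2. apply is_RInt_unique. apply (is_RInt_derive (V:=R_CompleteNormedModule) h dh); auto.
Qed.

Lemma int_xd_FTC W h g p : open_dom W -> segment_domain W -> continuous_on W g -> inW W p ->
  (forall q, inW W q -> is_derive (fun t => ev h (with_coord Ixd t q)) (coord Ixd q) (ev g q)) ->
  int_xd g p = ev h p - ev h (with_coord Ixd 0 p).
Proof.
  intros Ho Hs Hg Hp Hd. unfold int_xd, slice_int.
  rewrite (RInt_of_derive (fun t => ev h (with_coord Ixd t p))), with_coord_id; auto.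
  - intros t Ht. pose proof (Hd _ (seg_xd_in_dom W p t Hs Hp Ht)) as D.
    rewrite coord_with in D. eapply is_derive_ext; [|exact D]. intros z; cbv beta; rewrite with_with; auto.
  - intros t Ht. apply (slice_continuous_at W); auto. apply seg_xd_in_dom; auto.
Qed.

Lemma int_yd_FTC W h g p : open_dom W -> segment_domain W -> continuous_on W g -> inW W p ->
  (forall q, inW W q -> is_derive (fun t => ev h (with_coord Iyd t q)) (coord Iyd q) (ev g q)) ->
  int_yd g p = ev h (with_coord Ixd 0 p) - ev h (with_coord Iyd 0 (with_coord Ixd 0 p)).
Proof.
  intros Ho Hs Hg Hp Hd. unfold int_yd, slice_int.
  rewrite (RInt_of_derive (fun t => ev h (with_coord Iyd t (with_coord Ixd 0 p)))).
  - f_equal. f_equal. clear; by_coords.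
  - intros t Ht. pose proof (Hd _ (seg_yd_in_dom W p t Hs Hp Ht)) as D.
    rewrite coord_with in D. eapply is_derive_ext; [|exact D]. intros z; cbv beta; rewrite with_with; auto.
  - intros t Ht. apply (slice_continuous_at W); auto. apply seg_yd_in_dom; auto.
Qed.

Definition sub4 (f g : F4) : F4 := fun x y u v => f x y u v - g x y u v.

Lemma int_xd_sub W f g p : open_dom W -> segment_domain W ->
  continuous_on W f -> continuous_on W g -> inW W p ->
  int_xd f p - int_xd g p = int_xd (sub4 f g) p.
Proof.
  intros Ho Hs Hf Hg Hp. unfold int_xd, slice_int.
  rewrite <- (RInt_minus (V:=R_CompleteNormedModule)); [apply RInt_ext; intros; by_coords| |];
    apply (ex_RInt_slice W); auto; intros; apply seg_xd_in_dom; auto.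
Qed.

Lemma int_yd_sub W f g p : open_dom W -> segment_domain W ->
  continuous_on W f -> continuous_on W g -> inW W p ->
  int_yd f p - int_yd g p = int_yd (sub4 f g) p.
Proof.
  intros Ho Hs Hf Hg Hp. unfold int_yd, slice_int.
  rewrite <- (RInt_minus (V:=R_CompleteNormedModule)); [apply RInt_ext; intros; by_coords| |];
    apply (ex_RInt_slice W); auto; intros; apply seg_yd_in_dom; auto.
Qed.

Lemma continuous_on_sub W f g : continuous_on W f -> continuous_on W g -> continuous_on W (sub4 f g).
Proof.
  intros Hf Hg p Hp eps He.
  destruct (Hf p Hp (eps / 2)) as [d1 [Hd1 H1]]; [lra|].
  destruct (Hg p Hp (eps / 2)) as [d2 [Hd2 H2]]; [lra|].
  exists (Rmin d1 d2); split; [apply Rmin_pos; auto|]. intros q Hq Hc.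
  assert (C1 : close_to d1 q p) by (intros i; eapply Rlt_le_trans; [apply Hc|apply Rmin_l]).
  assert (C2 : close_to d2 q p) by (intros i; eapply Rlt_le_trans; [apply Hc|apply Rmin_r]).
  specialize (H1 q Hq C1). specialize (H2 q Hq C2).
  replace (ev (sub4 f g) q - ev (sub4 f g) p) with ((ev f q - ev f p) - (ev g q - ev g p))
    by (destruct q as [[[? ?] ?] ?], p as [[[? ?] ?] ?]; unfold sub4; simpl; ring).
  eapply Rle_lt_trans; [apply Rabs_triang|]. rewrite Rabs_Ropp. lra.
Qed.

Lemma int_xd_exact W f g p : open_dom W -> segment_domain W -> C2_on W g -> inW W p ->
  (forall q, inW W q -> ev (pd Iyd f) q = ev (pd Ixd g) q) ->
  int_xd (pd Iyd f) p + ev g (with_coord Ixd 0 p) = ev g p.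
Proof.
  intros Ho Hs Hg Hp Hfg.
  replace (int_xd (pd Iyd f) p) with (int_xd (pd Ixd g) p).
  - rewrite (int_xd_FTC W g (pd Ixd g) p); auto using C2_pd_continuous; [lra|].
    intros q Hq. apply (is_derive_pd W); auto using C2_partials.
  - unfold int_xd, slice_int. apply RInt_ext. intros nu Hnu. symmetry. apply Hfg.
    apply seg_xd_in_dom; auto. lra.
Qed.

Section Exactness.
Variables (W : Dom4) (Ax Ay Bxx Bxy Byy : F4).
Hypotheses (Ho : open_dom W) (Hs : segment_domain W).
Hypotheses (HAx : C2_on W Ax) (HAy : C2_on W Ay)
           (HBxx : C2_on W Bxx) (HBxy : C2_on W Bxy) (HByy : C2_on W Byy).
Hypothesis Hh : helmholtz W Ax Ay Bxx Bxy Byy.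

Let k := kappa Bxx Bxy Byy.

Lemma kappa_x_on q : inW W q -> ev (f1_x k) q = - (int_xd Bxx q + int_yd Bxy q).
Proof. apply (kappa_coef_eq W); auto using C2_continuous. Qed.

Lemma kappa_y_on q : inW W q -> ev (f1_y k) q = - (int_xd Bxy q + int_yd Byy q).
Proof. apply (kappa_coef_eq W); auto using C2_continuous. Qed.

Lemma kappa_partials : form1_has_partials_on W k.
Proof.
  assert (Hzero := has_partials_of_partials_on W _ (partials_on_zero W)).
  split; [|split; [|split; exact Hzero]]; apply has_partials_of_partials_on;
    intros i p Hp; eexists.
  - apply (is_derive_kappa_coef W _ Bxx Bxy); auto using kappa_x_on.
  - apply (is_derive_kappa_coef W _ Bxy Byy); auto using kappa_y_on.
Qed.

Lemma pd_kappa_x i p : inW W p -> ev (pd i (f1_x k)) p = - (int_xd_pd i Bxx p + int_yd_pd i Bxy p).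
Proof. intros Hp. apply pd_of_is_derive, (is_derive_kappa_coef W _ Bxx Bxy); auto using kappa_x_on. Qed.

Lemma pd_kappa_y i p : inW W p -> ev (pd i (f1_y k)) p = - (int_xd_pd i Bxy p + int_yd_pd i Byy p).
Proof. intros Hp. apply pd_of_is_derive, (is_derive_kappa_coef W _ Bxy Byy); auto using kappa_y_on. Qed.

(** Integrating dD/dxd along [0, xd] and then dD/dyd along [0, yd] at xd = 0. *)
Lemma int_D_identity p : inW W p ->
  (int_xd (pd Iy Bxx) p - int_xd (pd Ix Bxy) p) + (int_yd (pd Iy Bxy) p - int_yd (pd Ix Byy) p)
  = / 2 * ev (Dfun Ax Ay) p - / 2 * ev (Dfun Ax Ay) (with_coord Iyd 0 (with_coord Ixd 0 p)).
Proof.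
  intros Hp. set (hD := fun x y u v => / 2 * Dfun Ax Ay x y u v).
  rewrite (int_xd_sub W), (int_yd_sub W); auto using C2_pd_continuous.
  rewrite (int_xd_FTC W hD), (int_yd_FTC W hD);
    auto using continuous_on_sub, C2_pd_continuous.
  - destruct p as [[[? ?] ?] ?]; unfold hD; simpl; ring.
  - intros q Hq. eapply is_derive_val.
    + apply (is_derive_ext (fun t => / 2 * ev (Dfun Ax Ay) (with_coord Iyd t q)));
        [intros; unfold hD; by_coords|].
      apply is_derive_scalR, (D_deriv_yd W Ax Ay Bxx Bxy Byy); auto.
    + destruct q as [[[? ?] ?] ?]; unfold sub4; simpl; field.
  - intros q Hq. eapply is_derive_val.
    + apply (is_derive_ext (fun t => / 2 * ev (Dfun Ax Ay) (with_coord Ixd t q)));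
        [intros; unfold hD; by_coords|].
      apply is_derive_scalR, (D_deriv_xd W Ax Ay Bxx Bxy Byy); auto.
    + destruct q as [[[? ?] ?] ?]; unfold sub4; simpl; field.
Qed.

Lemma alpha_omega_exact : form2_eq_on W (sub2 (alpha' Ax Ay Bxx Bxy Byy) (omega Ax Ay)) (dform1 k).
Proof.
  intros x y u v Hp. change (W x y u v) with (inW W (x, y, u, v)) in Hp.
  pose proof (int_D_identity _ Hp) as ED.
  pose proof (int_xd_exact W Bxx Bxy _ Ho Hs HBxy Hp (helm_Bxx_Bxy W Ax Ay Bxx Bxy Byy Hh)) as Ex.
  pose proof (int_xd_exact W Bxy Byy _ Ho Hs HByy Hp
                (fun q Hq => eq_sym (helm_Byy_Bxy W Ax Ay Bxx Bxy Byy Hh q Hq))) as Ey.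
  pose proof (pd_kappa_x Iy _ Hp) as Xy. pose proof (pd_kappa_x Ixd _ Hp) as Xxd.
  pose proof (pd_kappa_x Iyd _ Hp) as Xyd. pose proof (pd_kappa_y Ix _ Hp) as Yx.
  pose proof (pd_kappa_y Ixd _ Hp) as Yxd. pose proof (pd_kappa_y Iyd _ Hp) as Yyd.
  pose proof (pd_zero Ix (x, y, u, v)) as Zx. pose proof (pd_zero Iy (x, y, u, v)) as Zy.
  pose proof (pd_zero Ixd (x, y, u, v)) as Zxd. pose proof (pd_zero Iyd (x, y, u, v)) as Zyd.
  cbn [ev pd with_coord coord int_xd_pd int_yd_pd] in *.
  unfold sub2, alpha', omega, dform1.
  cbn [f2_xy f2_xxd f2_xyd f2_yxd f2_yyd f2_xdyd f1_xd f1_yd].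
  change (f1_xd k) with (fun _ _ _ _ : R => 0). change (f1_yd k) with (fun _ _ _ _ : R => 0).
  rewrite Xy, Xxd, Xyd, Yx, Yxd, Yyd, Zx, Zy, Zxd, Zyd.
  repeat split; lra.
Qed.
End Exactness.

Theorem theorem3p3 (W : Dom4) (Ax Ay Bxx Bxy Byy : F4) :
  open4 W -> segment_domain W ->
  smooth_on W Ax -> smooth_on W Ay ->
  smooth_on W Bxx -> smooth_on W Bxy -> smooth_on W Byy ->
  helmholtz W Ax Ay Bxx Bxy Byy ->
  form1_has_partials_on W (kappa Bxx Bxy Byy) /\
  form2_eq_on W (sub2 (alpha' Ax Ay Bxx Bxy Byy) (omega Ax Ay))
                (dform1 (kappa Bxx Bxy Byy)).
Proof.
  intros Ho Hs sAx sAy sBxx sBxy sByy Hh.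
  pose proof (open_dom_of_open4 W Ho) as Ho'.
  pose proof (C2_of_smooth W Ax sAx) as HAx. pose proof (C2_of_smooth W Ay sAy) as HAy.
  pose proof (C2_of_smooth W Bxx sBxx) as HBxx. pose proof (C2_of_smooth W Bxy sBxy) as HBxy.
  pose proof (C2_of_smooth W Byy sByy) as HByy.
  split.
  - exact (kappa_partials W Bxx Bxy Byy Ho' Hs HBxx HBxy HByy).
  - exact (alpha_omega_exact W Ax Ay Bxx Bxy Byy Ho' Hs HAx HAy HBxx HBxy HByy Hh).
Qed.
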